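(* Let $\phi:\mathbb{R}^n\to\mathbb{R}\cup\{+\infty\}$ be $m_\phi$-weakly convex (possibly nonsmooth) and let $g:\mathbb{R}^n\to\mathbb{R}\cup\{+\infty\}$ be proper, closed and convex; set $\Psi:=\phi-g$. For $0<\mu<1/m_\phi$ define $\Psi_\mu(\bm z):=\mathcal{M}_{\mu\phi}(\bm z)-\mathcal{M}_{\mu g}(\bm z)$, which is continuously differentiable. Let $\varepsilon>0$ and $0<\mu<1/m_\phi$. If $\bar{\bm z}\in\mathbb{R}^n$ satisfies $\|\nabla\Psi_\mu(\bar{\bm z})\|\le\min\{1,\mu^{-1}\}\varepsilon$, then $\bar{\bm x}:=\mathrm{prox}_{\mu\phi}(\bar{\bm z})$ is an $\varepsilon$-critical point of $\Psi$ with auxiliary point $\bar{\bm y}:=\mathrm{prox}_{\mu g}(\bar{\bm z})$, i.e. there exists $\bar{\bm u}\in\partial\phi(\bar{\bm x})-\partial g(\bar{\bm y})$ with $\max\{\|\bar{\bm u}\|,\|\bar{\bm x}-\bar{\bm y}\|\}\le\varepsilon$.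
   Context: A function $\phi$ is $m_\phi$-weakly convex if $\phi+\frac{m_\phi}{2}\|\cdot\|^2$ is convex. For a function $\varphi$ and $\mu>0$, the Moreau envelope and proximal mapping are $\mathcal{M}_{\mu\varphi}(\bm z):=\min_{\bm x}\{\varphi(\bm x)+\frac{1}{2\mu}\|\bm x-\bm z\|^2\}$ and $\mathrm{prox}_{\mu\varphi}(\bm z):=\arg\min_{\bm x}\{\varphi(\bm x)+\frac{1}{2\mu}\|\bm x-\bm z\|^2\}$ (well-defined and single-valued for $\mu\in(0,1/m_\phi)$ in the weakly convex case). $\partial$ denotes the general (limiting) subdifferential, which coincides with the convex subdifferential for convex functions. A point $\bar{\bm x}$ is an $\varepsilon$-critical point of $\Psi=\phi-g$ if there exist $\bar{\bm y}\in\mathbb{R}^n$ and $\bar{\bm u}\in\partial\phi(\bar{\bm x})-\partial g(\bar{\bm y})$ with $\max\{\|\bar{\bm u}\|,\|\bar{\bm x}-\bar{\bm y}\|\}\le\varepsilon$. Norms are Euclidean. *)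

From HB Require Import structures.
From mathcomp Require Import all_boot all_order all_algebra.
From mathcomp Require Import all_classical all_reals.
From mathcomp Require Import ereal.
Set Implicit Arguments. Unset Strict Implicit. Unset Printing Implicit Defensive.
Import Order.TTheory GRing.Theory Num.Theory.
Local Open Scope ring_scope.
Local Open Scope classical_set_scope.

Section Defs.
Variables (R : realType) (n : nat).
Notation V := 'rV[R]_n.

Definition dot (u v : V) : R := \sum_(i < n) u 0 i * v 0 i.
Definition enorm (u : V) : R := Num.sqrt (dot u u).

Definition proper_fun (f : V -> \bar R) : Prop :=
  (forall x, f x != -oo%E) /\ (exists x, f x < +oo)%E.

(* convexity of an extended-real valued function (convention 0 * (+oo) = 0) *)
Definition convex_fun (f : V -> \bar R) : Prop :=
  forall (x y : V) (t : R), 0 <= t -> t <= 1 ->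
    (f (t *: x + (1 - t) *: y)%R <= t%:E * f x + (1 - t)%:E * f y)%E.

Definition weakly_convex (m : R) (f : V -> \bar R) : Prop :=
  convex_fun (fun x => f x + ((m / 2) * enorm x ^+ 2)%:E)%E.

Definition lsc_fun (f : V -> \bar R) : Prop :=
  forall (x : V) (a : R), (a%:E < f x)%E ->
    exists2 d : R, 0 < d & forall y, enorm (y - x) < d -> (a%:E < f y)%E.

Definition moreau (f : V -> \bar R) (mu : R) (z : V) : \bar R :=
  ereal_inf [set (f x + ((2 * mu)^-1 * enorm (x - z) ^+ 2)%:E)%E | x in setT].

Definition is_prox (f : V -> \bar R) (mu : R) (z x : V) : Prop :=
  forall y : V, (f x + ((2 * mu)^-1 * enorm (x - z) ^+ 2)%:E
                 <= f y + ((2 * mu)^-1 * enorm (y - z) ^+ 2)%:E)%E.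

(* Psi_mu = M_{mu phi} - M_{mu g} (both envelopes are finite under the hypotheses) *)
Definition psi_mu (phi g : V -> \bar R) (mu : R) (z : V) : R :=
  fine (moreau phi mu z) - fine (moreau g mu z).

Definition has_gradient (F : V -> R) (z d : V) : Prop :=
  forall eps : R, 0 < eps -> exists2 del : R, 0 < del &
    forall w : V, enorm (w - z) < del ->
      `|F w - F z - dot d (w - z)| <= eps * enorm (w - z).

Definition reg_subdiff (f : V -> \bar R) (x u : V) : Prop :=
  f x \is a fin_num /\
  forall eps : R, 0 < eps -> exists2 del : R, 0 < del &
    forall y : V, enorm (y - x) < del ->
      ((fine (f x) + dot u (y - x) - eps * enorm (y - x))%:E <= f y)%E.

Definition vcvg (s : nat -> V) (x : V) : Prop :=
  forall eps : R, 0 < eps -> exists N : nat, forall k, (N <= k)%N -> enorm (s k - x) < eps.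
Definition rcvg (s : nat -> R) (a : R) : Prop :=
  forall eps : R, 0 < eps -> exists N : nat, forall k, (N <= k)%N -> `|s k - a| < eps.

Definition lim_subdiff (f : V -> \bar R) (x u : V) : Prop :=
  f x \is a fin_num /\
  exists (xs us : nat -> V),
    [/\ vcvg xs x, vcvg us u,
        rcvg (fun k => fine (f (xs k))) (fine (f x)) &
        forall k, reg_subdiff f (xs k) (us k)].

End Defs.

(* Let x, y be the prox points of phi and g at z and a = (z - x) / mu, b = (z - y) / mu.
   Optimality of the prox points combined with (weak) convexity yields the global minorants
   phi v >= phi x + <a, v - x> - m/2 |v - x|^2 and g v >= g y + <b, v - y>, so a and b are
   regular, hence limiting, subgradients.  Bounding M_{mu phi} w above by the value at x and
   M_{mu g} w below through the minorant of g gives the upper quadratic model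
   Psi_mu w <= Psi_mu z + <a - b, w - z> + |w - z|^2 / (2 mu); a function differentiable at z
   that lies below such a model has gradient a - b there.  Thus grad Psi_mu z = a - b and
   x - y = - mu (a - b), and the assumed bound on the gradient bounds both quantities by eps. *)

From HB Require Import structures.
From mathcomp Require Import all_boot all_order all_algebra.
From mathcomp Require Import all_classical all_reals.
From mathcomp Require Import ereal.
From mathcomp Require Import ring lra.
Import Order.TTheory GRing.Theory Num.Theory.
Set Implicit Arguments. Unset Strict Implicit.
Local Open Scope ring_scope.

Lemma invf2M (R : fieldType) (mu : R) : (2 * mu)^-1 = mu^-1 / 2.
Proof. by rewrite invfM mulrC. Qed.

Lemma le0_of_le_scaled (R : realFieldType) (a b : R) :
  (forall t, 0 < t -> t <= 1 -> a <= t * b) -> a <= 0.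
Proof.
move=> le_ab; rewrite leNgt; apply/negP => a0.
have [b0|b0] := lerP b 0; first by have := le_ab 1 ltr01 (lexx _); lra.
have ab0 : 0 < a + b by lra.
have t0 : 0 < a / (a + b) by rewrite divr_gt0.
have t1 : a / (a + b) <= 1 by rewrite ler_pdivrMr // mul1r; lra.
by have := le_ab _ t0 t1; rewrite mulrAC ler_pdivlMr //; nra.
Qed.

Lemma fine_between (R : realDomainType) (a b : R) (M : \bar R) :
  (a%:E <= M)%E -> (M <= b%:E)%E -> a <= fine M <= b.
Proof. by case: M => [r||] //=; rewrite !lee_fin => -> ->. Qed.

Section Euclidean.
Variables (R : realType) (n : nat).
Implicit Types (u v w : 'rV[R]_n) (k : R).

Lemma dotC u v : dot u v = dot v u.
Proof. by apply: eq_bigr => i _; rewrite mulrC. Qed.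

Lemma dotDl u v w : dot (u + v) w = dot u w + dot v w.
Proof. by rewrite /dot -big_split; apply: eq_bigr => i _; rewrite mxE mulrDl. Qed.

Lemma dotZl k u v : dot (k *: u) v = k * dot u v.
Proof. by rewrite /dot mulr_sumr; apply: eq_bigr => i _; rewrite mxE mulrA. Qed.

Lemma dotNl u v : dot (- u) v = - dot u v.
Proof. by rewrite -scaleN1r dotZl mulN1r. Qed.

Lemma dotBl u v w : dot (u - v) w = dot u w - dot v w.
Proof. by rewrite dotDl dotNl. Qed.

Lemma dotZr k u v : dot u (k *: v) = k * dot u v.
Proof. by rewrite dotC dotZl dotC. Qed.

Lemma dot_ge0 u : 0 <= dot u u.
Proof. by apply: sumr_ge0 => i _; rewrite -expr2 sqr_ge0. Qed.

Lemma dot_eq0 u : (dot u u == 0) = (u == 0).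
Proof.
apply/idP/eqP => [|->]; last by rewrite /dot big1 // => i _; rewrite mxE mul0r.
rewrite psumr_eq0 => [/allP u0|i _]; last by rewrite -expr2 sqr_ge0.
apply/matrixP => i j; rewrite ord1 mxE.
by have := u0 j (mem_index_enum j); rewrite /= mulf_eq0 orbb => /eqP.
Qed.

Lemma enorm_ge0 u : 0 <= enorm u.
Proof. exact: sqrtr_ge0. Qed.

Lemma sqr_enorm u : enorm u ^+ 2 = dot u u.
Proof. by rewrite sqr_sqrtr // dot_ge0. Qed.

Lemma enormZ k u : enorm (k *: u) = `|k| * enorm u.
Proof. by rewrite /enorm dotZl dotZr mulrA -expr2 sqrtrM ?sqr_ge0 // sqrtr_sqr. Qed.

Lemma enorm0 : enorm (0 : 'rV[R]_n) = 0.
Proof. by rewrite -(scale0r (0 : 'rV[R]_n)) enormZ normr0 mul0r. Qed.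

Lemma sqr_enormZ k u : enorm (k *: u) ^+ 2 = k ^+ 2 * enorm u ^+ 2.
Proof. by rewrite enormZ exprMn real_normK ?num_real. Qed.

Lemma enormN u : enorm (- u) = enorm u.
Proof. by rewrite -scaleN1r enormZ normrN normr1 mul1r. Qed.

Lemma sqr_enormD u v : enorm (u + v) ^+ 2 = enorm u ^+ 2 + 2 * dot u v + enorm v ^+ 2.
Proof. by rewrite !sqr_enorm !dotDl ![dot _ (u + v)]dotC !dotDl (dotC u v); ring. Qed.

Lemma sqr_enormB u v : enorm (u - v) ^+ 2 = enorm u ^+ 2 - 2 * dot u v + enorm v ^+ 2.
Proof. by rewrite sqr_enormD enormN dotC dotNl dotC; ring. Qed.

End Euclidean.

Section Subgradients.
Variables (R : realType) (n : nat).
Notation V := 'rV[R]_n.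
Implicit Types (f : V -> \bar R) (x y z s : V).

Definition proximal_subgradient (beta : R) f y s : Prop :=
  forall x, ((fine (f y) + dot s (x - y) - beta * enorm (x - y) ^+ 2)%:E <= f x)%E.

Lemma proximal_subgradient_reg_subdiff beta f y s :
  0 <= beta -> f y \is a fin_num -> proximal_subgradient beta f y s -> reg_subdiff f y s.
Proof.
move=> beta0 fy sub; split=> // e e0.
exists (e / (beta + 1)) => [|x lt_xy]; first by rewrite divr_gt0 // ltr_wpDl.
apply: le_trans (sub x); rewrite lee_fin lerD2l lerN2.
have r0 := enorm_ge0 (x - y).
have : (beta + 1) * enorm (x - y) <= e.
  by rewrite mulrC -ler_pdivlMr ?ltr_wpDl // ltW.
nra.
Qed.

Lemma reg_subdiff_lim_subdiff f x u : reg_subdiff f x u -> lim_subdiff f x u.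
Proof.
move=> sub; split; first by case: sub.
by exists (fun=> x), (fun=> u); split=> // e e0; exists 0%N => k _;
  rewrite subrr ?enorm0 ?normr0.
Qed.

Lemma is_prox_fin_num f mu z x : proper_fun f -> is_prox f mu z x -> f x \is a fin_num.
Proof.
move=> [f_ninfty [x0 fx0]] /(_ x0); rewrite fin_numE f_ninfty /=.
by move: fx0; case: (f x0) => [r0||] //= _; case: (f x).
Qed.

Lemma convex_fun_affine_minorant h y l (K : V -> R) :
  convex_fun h -> (forall x, h x != -oo%E) -> h y \is a fin_num ->
  (forall x (t : R), 0 < t -> t <= 1 ->
     ((fine (h y) + t * dot l (x - y) - t ^+ 2 * K x)%:E <= h (t *: x + (1 - t) *: y)%R)%E) ->
  forall x, ((fine (h y) + dot l (x - y))%:E <= h x)%E.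
Proof.
move=> hcvx h_ninfty hy seg x.
case hxE: (h x) (h_ninfty x) => [r||] // _; last by rewrite leey.
rewrite lee_fin -subr_le0; apply: (@le0_of_le_scaled _ _ (K x)) => t t0 t1.
have := le_trans (seg x t t0 t1) (hcvx x y t (ltW t0) t1).
set fy := fine (h y); rewrite hxE -(fineK hy) -!EFinM -EFinD lee_fin -/fy => le_t.
have : t * (fy + dot l (x - y) - r) <= t * (t * K x) by nra.
by rewrite ler_pM2l.
Qed.

Lemma convex_fun_weakly_convex0 f : convex_fun f -> weakly_convex 0 f.
Proof. by move=> cvx x y t t0 t1; rewrite !mul0r !adde0; exact: cvx. Qed.

Lemma weakly_convex_prox_subgradient m mu f z y :
  (forall x, f x != -oo%E) -> weakly_convex m f ->
  is_prox f mu z y -> f y \is a fin_num ->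
  proximal_subgradient (m / 2) f y (mu^-1 *: (z - y)).
Proof.
move=> f_ninfty wcvx prox fy.
(* [h] is convex and, by prox optimality, [h] plus a quadratic is minimal at [y]. *)
pose h x := (f x + (m / 2 * enorm x ^+ 2)%:E)%E.
have hy : h y \is a fin_num by rewrite fin_numD fy.
have fine_hy : fine (h y) = fine (f y) + m / 2 * enorm y ^+ 2.
  by rewrite /h -(fineK fy).
pose l := m *: y + mu^-1 *: (z - y).
have z_y : z - y = - (y - z) by rewrite opprB.
have h_sub : forall x, ((fine (h y) + dot l (x - y))%:E <= h x)%E.
  pose K x := ((2 * mu)^-1 - m / 2) * enorm (x - y) ^+ 2.
  apply: (convex_fun_affine_minorant (K := K)) => //.
    by move=> x; rewrite /h; case: (f x) (f_ninfty x).
  move=> x t t0 t1; rewrite -leeBlDr // -EFinB.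
  have w_y : t *: x + (1 - t) *: y = y + t *: (x - y).
    by rewrite scalerBl scale1r scalerBr addrCA addrA.
  have w_z : t *: x + (1 - t) *: y - z = (y - z) + t *: (x - y).
    by rewrite w_y addrAC.
  apply: le_trans (_ : ((fine (f y) + (2 * mu)^-1 * enorm (y - z) ^+ 2
      - (2 * mu)^-1 * enorm (t *: x + (1 - t) *: y - z) ^+ 2)%:E <= _)%E).
    rewrite lee_fin w_z w_y fine_hy (sqr_enormD (y - z)) (sqr_enormD y) /l (dotDl (m *: y)).
    by rewrite /K !dotZl !dotZr sqr_enormZ z_y dotNl invf2M; lra.
  by rewrite EFinB leeBlDr // EFinD fineK //; apply: prox.
move=> x; have := h_sub x; rewrite -leeBlDr // -EFinB; apply: le_trans.
have -> : enorm x ^+ 2 = enorm (y + (x - y)) ^+ 2 by rewrite addrC subrK.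
by rewrite lee_fin fine_hy (sqr_enormD y) /l (dotDl (m *: y)) !dotZl; lra.
Qed.

End Subgradients.

Section MoreauEnvelope.
Variables (R : realType) (n : nat).
Notation V := 'rV[R]_n.
Implicit Types (f : V -> \bar R) (w x y z s : V).

Lemma moreau_le f mu w x :
  (moreau f mu w <= f x + ((2 * mu)^-1 * enorm (x - w) ^+ 2)%:E)%E.
Proof. by apply: ge_ereal_inf; eexists => //; exists x. Qed.

Lemma moreau_is_prox f mu z x : f x \is a fin_num -> is_prox f mu z x ->
  moreau f mu z = (fine (f x) + (2 * mu)^-1 * enorm (x - z) ^+ 2)%:E.
Proof.
move=> fx prox; rewrite EFinD fineK //; apply/le_anti; rewrite moreau_le /=.
by apply/ereal_infP => _ [y _ <-]; exact: prox.
Qed.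

Lemma quadratic_ge_min (al : R) (p h : V) : 0 < al ->
  - (enorm p ^+ 2 / (4 * al)) <= al * enorm h ^+ 2 + dot p h.
Proof.
move=> al0; rewrite -subr_ge0.
have -> : al * enorm h ^+ 2 + dot p h - - (enorm p ^+ 2 / (4 * al))
    = enorm ((2 * al) *: h + p) ^+ 2 / (4 * al).
  by rewrite sqr_enormD sqr_enormZ dotZl dotC; field; rewrite gt_eqF.
by rewrite divr_ge0 ?sqr_ge0 // mulr_ge0 // ltW.
Qed.

Lemma moreau_ge_proximal_subgradient beta f mu y s w :
  beta < (2 * mu)^-1 -> proximal_subgradient beta f y s ->
  ((fine (f y) + (2 * mu)^-1 * enorm (w - y) ^+ 2
    - enorm (s - mu^-1 *: (w - y)) ^+ 2 / (4 * ((2 * mu)^-1 - beta)))%:E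
   <= moreau f mu w)%E.
Proof.
move=> beta_lt sub; apply/ereal_infP => _ [x _ <-].
apply: le_trans (leeD (sub x) (lexx _)); rewrite -EFinD lee_fin.
have := @quadratic_ge_min ((2 * mu)^-1 - beta) (s - mu^-1 *: (w - y)) (x - y).
rewrite subr_gt0 => /(_ beta_lt).
have -> : x - w = (x - y) - (w - y) by rewrite opprB addrA subrK.
rewrite (sqr_enormB (x - y)) (dotBl s) dotZl (dotC (w - y)) !invf2M.
lra.
Qed.

Lemma psi_mu_le_quadratic phi g beta mu z x y s :
  0 < mu -> beta < (2 * mu)^-1 ->
  phi x \is a fin_num -> is_prox phi mu z x -> proximal_subgradient beta phi x s ->
  g y \is a fin_num -> is_prox g mu z y -> proximal_subgradient 0 g y (mu^-1 *: (z - y)) ->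
  forall w, psi_mu phi g mu w - psi_mu phi g mu z
    <= dot (mu^-1 *: (z - x) - mu^-1 *: (z - y)) (w - z) + (2 * mu)^-1 * enorm (w - z) ^+ 2.
Proof.
move=> mu0 beta_lt phix pxphi sphi gy pxg sg w.
have c0 : 0 < (2 * mu)^-1 by rewrite invr_gt0 mulr_gt0.
have phi_up : fine (moreau phi mu w) <= fine (phi x) + (2 * mu)^-1 * enorm (x - w) ^+ 2.
  have up : (moreau phi mu w <= (fine (phi x) + (2 * mu)^-1 * enorm (x - w) ^+ 2)%:E)%E.
    by rewrite EFinD fineK ?moreau_le.
  by case/andP: (fine_between (moreau_ge_proximal_subgradient w beta_lt sphi) up).
have g_lo : fine (g y) + (2 * mu)^-1 * enorm (w - y) ^+ 2 - (2 * mu)^-1 * enorm (w - z) ^+ 2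
    <= fine (moreau g mu w).
  have up : (moreau g mu w <= (fine (g y) + (2 * mu)^-1 * enorm (y - w) ^+ 2)%:E)%E.
    by rewrite EFinD fineK ?moreau_le.
  case/andP: (fine_between (moreau_ge_proximal_subgradient w c0 sg) up) => + _.
  rewrite -scalerBr (_ : z - y - (w - y) = - (w - z)); last by rewrite !opprB addrA subrK.
  rewrite sqr_enormZ enormN subr0.
  have -> // : mu^-1 ^+ 2 * enorm (w - z) ^+ 2 / (4 / (2 * mu))
      = (2 * mu)^-1 * enorm (w - z) ^+ 2.
  by field; rewrite gt_eqF.
have psi_z : psi_mu phi g mu z = fine (phi x) + (2 * mu)^-1 * enorm (x - z) ^+ 2
    - (fine (g y) + (2 * mu)^-1 * enorm (y - z) ^+ 2).
  by rewrite /psi_mu (moreau_is_prox phix pxphi) (moreau_is_prox gy pxg).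
have x_w : x - w = (x - z) - (w - z) by rewrite opprB addrA subrK.
have w_y : w - y = (w - z) - (y - z) by rewrite opprB addrA subrK.
rewrite x_w (sqr_enormB (x - z)) in phi_up; rewrite w_y (sqr_enormB (w - z)) in g_lo.
rewrite psi_z {1}/psi_mu (dotBl (mu^-1 *: (z - x))) !dotZl -(opprB x) -(opprB y) !dotNl.
rewrite (dotC (y - z)) invf2M in phi_up g_lo *.
lra.
Qed.

End MoreauEnvelope.

Lemma has_gradient_le_quadratic (R : realType) (n : nat) (F : 'rV[R]_n -> R) z d p k :
  has_gradient F z d ->
  (forall w, F w - F z <= dot p (w - z) + k * enorm (w - z) ^+ 2) -> d = p.
Proof.
move=> grad upper; apply/eqP; rewrite -subr_eq0 -dot_eq0 -sqr_enorm sqrf_eq0.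
set v := d - p; set nu := enorm v.
rewrite eq_le enorm_ge0 andbT leNgt; apply/negP => nu0.
have [del del0 near] := grad (nu / 2) ltac:(by rewrite divr_gt0).
suff : nu ^+ 2 / 2 <= 0 by rewrite leNgt divr_gt0 ?exprn_gt0.
apply: (@le0_of_le_scaled _ _ (k * (del / (2 * nu)) * nu ^+ 2)) => t t0 t1.
(* Along [z + s *: v], the expansion at [z] and the upper model give [nu^2/2 <= k s nu^2]. *)
set s := t * (del / (2 * nu)).
have s0 : 0 < s by rewrite mulr_gt0 // divr_gt0 // mulr_gt0.
have w_z : z + s *: v - z = s *: v by rewrite addrAC subrr add0r.
have norm_sv : enorm (s *: v) = s * nu by rewrite enormZ gtr0_norm.
have := near (z + s *: v); rewrite w_z norm_sv.
have s_del : s * nu < del.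
  have -> : s * nu = t * del / 2 by rewrite /s; field; rewrite gt_eqF.
  nra.
move=> /(_ s_del); rewrite ler_norml dotZr => /andP[lower_w _].
have := upper (z + s *: v); rewrite w_z norm_sv dotZr => upper_w.
have dv : dot d v - dot p v = nu ^+ 2 by rewrite -dotBl sqr_enorm.
have : s * (nu ^+ 2 / 2) <= s * (k * s * nu ^+ 2) by nra.
by rewrite ler_pM2l // /s; lra.
Qed.

Unset Implicit Arguments. Set Strict Implicit.

Theorem proposition2p1 (R : realType) (n : nat)
    (phi g : 'rV[R]_n -> \bar R) (m_phi mu eps : R) (zbar xbar ybar d : 'rV[R]_n) :
  0 <= m_phi ->
  proper_fun phi -> lsc_fun phi -> weakly_convex m_phi phi ->
  proper_fun g -> lsc_fun g -> convex_fun g ->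
  0 < eps -> 0 < mu -> mu * m_phi < 1 ->
  has_gradient (psi_mu phi g mu) zbar d ->
  enorm d <= Num.min 1 mu^-1 * eps ->
  is_prox phi mu zbar xbar ->
  is_prox g mu zbar ybar ->
  exists u a b : 'rV[R]_n,
    [/\ lim_subdiff phi xbar a, lim_subdiff g ybar b, u = a - b &
        Num.max (enorm u) (enorm (xbar - ybar)) <= eps].
Proof.
(* Closedness only serves the existence of the prox points, which are given here. *)
move=> m0 pphi _ wphi pg _ cg eps0 mu0 mum grad hd pxphi pxg.
have phix := is_prox_fin_num pphi pxphi; have gy := is_prox_fin_num pg pxg.
have sphi := weakly_convex_prox_subgradient pphi.1 wphi pxphi phix.
have := weakly_convex_prox_subgradient pg.1 (convex_fun_weakly_convex0 cg) pxg gy.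
rewrite mul0r => sg.
have m_lt : m_phi / 2 < (2 * mu)^-1.
  by rewrite invf2M ltr_pM2r // -[mu^-1]mulr1 ltr_pdivlMl.
have dE := has_gradient_le_quadratic grad (psi_mu_le_quadratic mu0 m_lt phix pxphi sphi gy pxg sg).
exists d, (mu^-1 *: (zbar - xbar)), (mu^-1 *: (zbar - ybar)); split => //.
- exact/reg_subdiff_lim_subdiff/(proximal_subgradient_reg_subdiff _ phix sphi)/divr_ge0.
- exact/reg_subdiff_lim_subdiff/(proximal_subgradient_reg_subdiff (lexx 0) gy sg).
have xy : xbar - ybar = (- mu) *: d.
  rewrite dE -scalerBr scalerA mulNr mulfV ?gt_eqF // scaleN1r opprB.
  by rewrite opprB [RHS]addrC addrA subrK.
have d_le1 : enorm d <= eps by apply: le_trans hd (ler_piMl (ltW eps0) _); rewrite ge_min lexx.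
have d_le_mu : enorm d <= mu^-1 * eps.
  by apply: le_trans hd (ler_wpM2r (ltW eps0) _); rewrite ge_min lexx orbT.
by rewrite ge_max xy enormZ normrN gtr0_norm // -ler_pdivlMl // d_le1.
Qed.
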